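(* Let $T,S\in\mathcal M_n(\mathbb C)$ and let $e,f,g,h$ be non-negative continuous functions on $[0,\infty)$ such that $f(t)g(t)=t$ and $e(t)h(t)=t$ for all $t\ge0$. Then $$s_j(T+S)\le\big\|g^2(|T^*|)+h^2(|S^*|)\big\|^{1/2}\,s_j^{1/2}\big(f^2(|T|)+e^2(|S|)\big)\quad\text{for every }j=1,\dots,n.$$ Furthermore, for every $p>0$, $$\|T+S\|_p\le\big\|g^2(|T^*|)+h^2(|S^*|)\big\|^{1/2}\,\big\|f^2(|T|)+e^2(|S|)\big\|_{p/2}^{1/2}.$$
   Context: $\mathcal M_n(\mathbb C)$ is the set of $n\times n$ complex matrices; $|T|=(T^*T)^{1/2}$; functions of positive matrices are defined by functional calculus. $s_1(T)\ge\dots\ge s_n(T)$ are the singular values of $T$ (eigenvalues of $|T|$). $\|T\|=s_1(T)$ is the operator norm, and for $p>0$, $\|T\|_p=\big(\sum_{j=1}^n s_j^p(T)\big)^{1/p}$ is the Schatten $p$-norm (a quasi-norm for $p<1$). *)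

From mathcomp Require Import all_boot all_order all_algebra.
From mathcomp Require Import complex.
From mathcomp Require Import classical_sets reals topology normedtype exp.
Set Implicit Arguments. Unset Strict Implicit. Unset Printing Implicit Defensive.
Import Order.TTheory GRing.Theory Num.Theory Num.Def.
Local Open Scope ring_scope.

Section MatrixFunctions.
Variable R : realType.
Local Notation C := R[i].

Definition adjmx n (A : 'M[C]_n) : 'M[C]_n := map_mx conjC A^T.

(* Functional calculus for a normal (in our uses: positive semidefinite)
   matrix A = U^* diag(l_1..l_n) U with U unitary (spectral theorem,
   spectral.v):  phi(A) := U^* diag(phi(Re l_1), ..., phi(Re l_n)) U.
   phi only needs to be given on the reals (the spectrum of a Hermitian
   matrix is real). *)
Definition fcalc (phi : R -> R) n (A : 'M[C]_n) : 'M[C]_n :=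
  invmx (spectralmx A)
  *m diag_mx (map_mx (fun z : C => (phi (complex.Re z))%:C%C) (spectral_diag A))
  *m spectralmx A.

Definition absmx n (T : 'M[C]_n) : 'M[C]_n := fcalc Num.sqrt (adjmx T *m T).

Definition eigvals n (A : 'M[C]_n) : seq R :=
  sort (fun x y : R => y <= x)
       [seq complex.Re (spectral_diag A 0 i) | i <- enum 'I_n].

Definition singvals n (T : 'M[C]_n) : seq R := eigvals (absmx T).

(* s_{j+1}(T) for j : 'I_n  (0-based index) *)
Definition sv n (T : 'M[C]_n) (j : nat) : R := nth 0 (singvals T) j.

Definition opnorm n (T : 'M[C]_n) : R := sv T 0.

Definition schatten (p : R) n (T : 'M[C]_n) : R :=
  powR (\sum_(x <- singvals T) powR x p) p^-1.

End MatrixFunctions.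

(* Vectors are rows and [<u, v> = u v^*].  Polar decomposition writes
   [T = W Σ P] with [P] unitary, [|T| = P^* Σ P], [Σ] real diagonal, and [W] a
   partial isometry with [T T^* W = W Σ^2].  As [f g = id], [Σ = f(Σ) g(Σ)], so
   the pairing [<x T^*, w>] splits as [<x A, w B>] with [|x A|^2 = <x f^2(|T|), x>]
   and, by Bessel's inequality for [W], [|w B|^2 <= <w g^2(|T^*|), w>].
   Concatenating these factorizations for [T] and [S] and applying Cauchy-Schwarz
   gives [|<x (T+S)^*, w>|^2 <= <x F, x> <w G, w>]; for [w = x (T+S)^*] this is
   the Loewner inequality [|T+S|^2 <= ||G|| F].  The min-max principle turns it
   into [s_j(T+S)^2 <= ||G|| lambda_j(F)], and summing [p]-th powers gives the
   Schatten bound. *)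

From mathcomp Require Import all_boot all_order all_algebra.
From mathcomp Require Import complex.
From mathcomp Require Import classical_sets reals topology normedtype exp.
From mathcomp Require Import ring.
Import Order.TTheory GRing.Theory Num.Theory.
Local Open Scope ring_scope.

Set Implicit Arguments. Unset Strict Implicit. Unset Printing Implicit Defensive.

(* Entrywise [e_i M_ij = M_ij d_j], so [e_i = d_j] wherever [M_ij != 0]. *)
Lemma map_diag_mx_intertwine (F : idomainType) m n (e : 'rV[F]_m) (d : 'rV[F]_n)
    (M : 'M[F]_(m, n)) (phi : F -> F) :
  diag_mx e *m M = M *m diag_mx d ->
  diag_mx (map_mx phi e) *m M = M *m diag_mx (map_mx phi d).
Proof.
move=> /matrixP eMd; apply/matrixP => i j.
have eMd_ij : e 0 i * M i j = M i j * d 0 j.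
  by have := eMd i j; rewrite (mul_diag_mx e) (mul_mx_diag M d) !mxE.
rewrite (mul_diag_mx (map_mx phi e)) (mul_mx_diag M (map_mx phi d)) !mxE.
have [->|Mij_neq0] := eqVneq (M i j) 0; first by rewrite mulr0 mul0r.
have -> : e 0 i = d 0 j by apply: (mulIf Mij_neq0); rewrite eMd_ij mulrC.
by rewrite mulrC.
Qed.

Section UnitaryDiagonalization.
Local Open Scope sesquilinear_scope.
Variable C : numClosedFieldType.
Local Notation "''[' u , v ]" := (dotmx u v) : ring_scope.
Local Notation "''[' u ]" := (dotmx u u) : ring_scope.

Lemma trmxC_mul m n p (A : 'M[C]_(m, n)) (B : 'M[C]_(n, p)) :
  (A *m B)^t* = B^t* *m A^t*.
Proof. by rewrite trmx_mul map_mxM. Qed.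

Lemma trmxCD m n (A B : 'M[C]_(m, n)) : (A + B)^t* = A^t* + B^t*.
Proof. by rewrite linearD /= map_mxD. Qed.

Lemma trmxCB m n (A B : 'M[C]_(m, n)) : (A - B)^t* = A^t* - B^t*.
Proof. by rewrite linearB /= map_mxB. Qed.

Lemma trmxC1 n : (1%:M : 'M[C]_n)^t* = 1%:M.
Proof. by rewrite trmx1 map_mx1. Qed.

Lemma trmxC_diag n (d : 'rV[C]_n) : (diag_mx d)^t* = diag_mx (map_mx Num.conj d).
Proof. by rewrite tr_diag_mx map_diag_mx. Qed.

Lemma unitarymx_mulCtmx n (P : 'M[C]_n) : P \is unitarymx -> P^t* *m P = 1%:M.
Proof. by move=> PU; rewrite -[P^t*]mul1mx mulmxKtV. Qed.

Lemma unitarymx_mulmxCt n (P : 'M[C]_n) : P \is unitarymx -> P *m P^t* = 1%:M.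
Proof. by move/unitarymxP. Qed.

Lemma unitary_diag_normalmx n (P : 'M[C]_n) (d : 'rV[C]_n) :
  P \is unitarymx -> P^t* *m diag_mx d *m P \is normalmx.
Proof.
by move=> PU; apply/orthomx_spectral_subproof; exists (P, d); rewrite //= invmx_unitary.
Qed.

Lemma normalmx_spectral n (A : 'M[C]_n) : A \is normalmx ->
  A = (spectralmx A)^t* *m diag_mx (spectral_diag A) *m spectralmx A.
Proof. by move=> /orthomx_spectralP {1}->; rewrite invmx_unitary // spectral_unitarymx. Qed.

Lemma selfadj_normalmx n (A : 'M[C]_n) : A^t* = A -> A \is normalmx.
Proof. by move=> AA; apply/normalmxP; rewrite AA. Qed.

Lemma unitary_diag_map n (P Q : 'M[C]_n) (d e : 'rV[C]_n) (psi : C -> C) :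
  P \is unitarymx -> Q \is unitarymx ->
  Q^t* *m diag_mx e *m Q = P^t* *m diag_mx d *m P ->
  Q^t* *m diag_mx (map_mx psi e) *m Q = P^t* *m diag_mx (map_mx psi d) *m P.
Proof.
move=> PU QU deq; set M := Q *m P^t*.
have eM_Md : diag_mx e *m M = M *m diag_mx d.
  have := congr1 (fun A => Q *m A *m P^t*) deq; rewrite /=.
  rewrite !mulmxA (unitarymx_mulmxCt QU) mul1mx.
  by rewrite -!(mulmxA _ P) (unitarymx_mulmxCt PU) mulmx1.
have := map_diag_mx_intertwine psi eM_Md => psi_eM_Md.
rewrite -[X in _ *m X = _](mulmx1 Q) -(unitarymx_mulCtmx PU) !mulmxA.
rewrite -[_ *m Q *m P^t*]mulmxA -/M -[_ *m _ *m M]mulmxA psi_eM_Md !mulmxA.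
by rewrite /M (unitarymx_mulCtmx QU) mul1mx.
Qed.

Lemma unitary_diag_mul_self n (P : 'M[C]_n) (d : 'rV[C]_n) : P \is unitarymx ->
  (P^t* *m diag_mx d *m P) *m (P^t* *m diag_mx d *m P) =
  P^t* *m diag_mx (\row_i (d 0 i * d 0 i)) *m P.
Proof.
move=> PU; rewrite !mulmxA -(mulmxA _ P) (unitarymx_mulmxCt PU) mulmx1.
by rewrite -(mulmxA (P^t*) (diag_mx d) (diag_mx d)) (mulmx_diag d d).
Qed.

Lemma dotmx_diagE n (x : 'rV[C]_n) : '[x] = \sum_i x 0 i * (x 0 i)^*.
Proof. by rewrite dotmxE mxE; apply: eq_bigr => i _; rewrite !mxE. Qed.

Lemma dnorm_unitary n (P : 'M[C]_n) (x : 'rV[C]_n) :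
  P \is unitarymx -> '[x *m P^t*] = '[x].
Proof.
move=> PU; rewrite !dotmxE trmxC_mul trmxCK !mulmxA -(mulmxA x).
by rewrite (unitarymx_mulCtmx PU) mulmx1.
Qed.

Definition qform n (A : 'M[C]_n) (x : 'rV[C]_n) : C := '[x *m A, x].

Lemma qformE n (A : 'M[C]_n) x : qform A x = (x *m A *m x^t*) 0 0.
Proof. exact: dotmxE. Qed.

Lemma qformD n (A B : 'M[C]_n) x : qform (A + B) x = qform A x + qform B x.
Proof. by rewrite !qformE mulmxDr mulmxDl mxE. Qed.

Lemma qformB n (A B : 'M[C]_n) x : qform (A - B) x = qform A x - qform B x.
Proof. by rewrite !qformE mulmxBr mulmxBl !mxE. Qed.

Lemma dnorm_mulmx n m (A : 'M[C]_(n, m)) x : '[x *m A] = qform (A *m A^t*) x.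
Proof. by rewrite qformE dotmxE trmxC_mul !mulmxA. Qed.

Lemma qform_mulCtmx n (X : 'M[C]_n) x : qform (X^t* *m X) x = '[x *m X^t*].
Proof. by rewrite dnorm_mulmx trmxCK. Qed.

Lemma qform_row n (A M : 'M[C]_n) i : qform A (row i M) = (M *m A *m M^t*) i i.
Proof.
rewrite qformE !mxE; apply: eq_bigr => k _; rewrite !mxE; congr (_ * _).
by apply: eq_bigr => l _; rewrite !mxE.
Qed.

Lemma qform_unitary_diag n (P : 'M[C]_n) (d : 'rV[C]_n) x :
  qform (P^t* *m diag_mx d *m P) x =
  \sum_i d 0 i * ((x *m P^t*) 0 i * ((x *m P^t*) 0 i)^*).
Proof.
have E : P *m x^t* = (x *m P^t*)^t* by rewrite trmxC_mul trmxCK.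
rewrite qformE !mulmxA -(mulmxA _ P) E -!mulmxA mulmxA mxE.
apply: eq_bigr => i _; rewrite (mul_diag_mx d) !mxE.
by rewrite mulrCA.
Qed.

Lemma qform_unitary_diag_le n (P : 'M[C]_n) (d : 'rV[C]_n) (b : C) x :
  P \is unitarymx -> (forall i, (x *m P^t*) 0 i != 0 -> d 0 i <= b) ->
  qform (P^t* *m diag_mx d *m P) x <= b * '[x].
Proof.
move=> PU db; rewrite qform_unitary_diag -(dnorm_unitary x PU) dotmx_diagE mulr_sumr.
apply: ler_sum => i _.
have [->|nz] := eqVneq ((x *m P^t*) 0 i) 0; first by rewrite mul0r !mulr0.
by rewrite ler_wpM2r ?mul_conjC_ge0 ?db.
Qed.

Lemma qform_unitary_diag_ge n (P : 'M[C]_n) (d : 'rV[C]_n) (a : C) x :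
  P \is unitarymx -> (forall i, (x *m P^t*) 0 i != 0 -> a <= d 0 i) ->
  a * '[x] <= qform (P^t* *m diag_mx d *m P) x.
Proof.
move=> PU ad; rewrite qform_unitary_diag -(dnorm_unitary x PU) dotmx_diagE mulr_sumr.
apply: ler_sum => i _.
have [->|nz] := eqVneq ((x *m P^t*) 0 i) 0; first by rewrite mul0r !mulr0.
by rewrite ler_wpM2r ?mul_conjC_ge0 ?ad.
Qed.

Lemma spectral_diag_qform n (A : 'M[C]_n) i : A \is normalmx ->
  spectral_diag A 0 i = qform A (row i (spectralmx A)).
Proof.
move=> An; rewrite qform_row.
move: (normalmx_spectral An) (spectral_unitarymx A).
move: (spectralmx _) (spectral_diag _) => Q e -> QU.
rewrite !mulmxA (unitarymx_mulmxCt QU) mul1mx -mulmxA (unitarymx_mulmxCt QU) mulmx1.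
by rewrite mxE eqxx mulr1n.
Qed.

Lemma mulCtmx_diag_eq0 n (Y : 'M[C]_n) i : (Y^t* *m Y) i i = 0 -> forall k, Y k i = 0.
Proof.
rewrite mxE => /eqP; rewrite psumr_eq0 => [/allP Y_i0 k|k _]; last first.
  by rewrite !mxE mulrC mul_conjC_ge0.
by have := Y_i0 k (mem_index_enum _); rewrite /= !mxE mulrC mul_conjC_eq0 => /eqP.
Qed.

Definition psdmx n (A : 'M[C]_n) := exists P, exists d : 'rV[C]_n,
  [/\ P \is unitarymx, forall i, 0 <= d 0 i & A = P^t* *m diag_mx d *m P].

Lemma psdmx_qform_ge0 n (A : 'M[C]_n) x : psdmx A -> 0 <= qform A x.
Proof.
case=> P [d [PU d_ge0 ->]]; rewrite qform_unitary_diag sumr_ge0 // => i _.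
by rewrite mulr_ge0 // mul_conjC_ge0.
Qed.

Lemma psdmx_selfadj n (A : 'M[C]_n) : psdmx A -> A^t* = A.
Proof.
case=> P [d [PU d_ge0 ->]]; rewrite !trmxC_mul trmxCK trmxC_diag.
have -> : map_mx Num.conj d = d by apply/rowP => i; rewrite !mxE geC0_conj.
exact: mulmxA.
Qed.

Lemma psdmxP n (A : 'M[C]_n) : A^t* = A -> (forall x, 0 <= qform A x) -> psdmx A.
Proof.
move=> AA qA_ge0; have An := selfadj_normalmx AA.
exists (spectralmx A), (spectral_diag A); split.
- exact: spectral_unitarymx.
- by move=> i; rewrite spectral_diag_qform.
- exact: normalmx_spectral.
Qed.

Lemma psdmx_spectral n (A : 'M[C]_n) : psdmx A ->
  [/\ A = (spectralmx A)^t* *m diag_mx (spectral_diag A) *m spectralmx A,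
      A \is normalmx & forall i, 0 <= spectral_diag A 0 i].
Proof.
move=> Apsd; have An := selfadj_normalmx (psdmx_selfadj Apsd).
split => //; first exact: normalmx_spectral.
by move=> i; rewrite spectral_diag_qform // psdmx_qform_ge0.
Qed.

Lemma psdmxD n (A B : 'M[C]_n) : psdmx A -> psdmx B -> psdmx (A + B).
Proof.
move=> Apsd Bpsd; apply: psdmxP; first by rewrite trmxCD !psdmx_selfadj.
by move=> x; rewrite qformD addr_ge0 // psdmx_qform_ge0.
Qed.

Lemma psdmx_mulCtmx n (X : 'M[C]_n) : psdmx (X^t* *m X).
Proof.
apply: psdmxP => [|x]; first by rewrite trmxC_mul trmxCK.
by rewrite qform_mulCtmx dnorm_ge0.
Qed.

End UnitaryDiagonalization.

Section CoordinateSubspaces.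
Local Open Scope sesquilinear_scope.
Variable C : numClosedFieldType.

Definition selmx n (I : {pred 'I_n}) : 'M[C]_(#|I|, n) :=
  \matrix_(k, i) ((enum_val k == i)%:R).

Lemma selmx_unitary n (I : {pred 'I_n}) : selmx I \is unitarymx.
Proof.
apply/unitarymxP/matrixP => k l; rewrite !mxE.
rewrite (bigD1 (enum_val k)) //= big1 => [|i /negbTE ne]; last first.
  by rewrite !mxE eq_sym ne mul0r.
rewrite !mxE eqxx mul1r addr0 (inj_eq enum_val_inj) eq_sym.
by case: (k == l); rewrite ?conjC1 ?conjC0.
Qed.

Lemma mulmx_selmx_notin n (I : {pred 'I_n}) (D : 'rV[C]_#|I|) i :
  i \notin I -> (D *m selmx I) 0 i = 0.
Proof.
move=> iNI; rewrite mxE big1 // => k _; rewrite mxE.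
have /negbTE -> : enum_val k != i by apply: contraNneq iNI => <-; apply: enum_valP.
by rewrite mulr0.
Qed.

(* Both subspaces are row spaces of [selmx I *m Q1] and [selmx J *m Q2], of ranks
   [#|I|] and [#|J|]; their intersection has rank at least [#|I| + #|J| - n]. *)
Lemma coord_subspaces_meet n (Q1 Q2 : 'M[C]_n) (I J : {pred 'I_n}) :
  Q1 \is unitarymx -> Q2 \is unitarymx -> (n < #|I| + #|J|)%N ->
  exists x : 'rV[C]_n, [/\ x != 0,
    forall i, i \notin I -> (x *m Q1^t*) 0 i = 0 &
    forall i, i \notin J -> (x *m Q2^t*) 0 i = 0].
Proof.
move=> Q1U Q2U IJ_gt_n; set V := selmx I *m Q1; set W := selmx J *m Q2.
have rankV : \rank V = #|I| by rewrite mxrank_unitary // mul_unitarymx // selmx_unitary.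
have rankW : \rank W = #|J| by rewrite mxrank_unitary // mul_unitarymx // selmx_unitary.
have VW_neq0 : (V :&: W)%MS != 0.
  rewrite -mxrank_eq0; apply/eqP => VW0; have := mxrank_sum_cap V W.
  rewrite rankV rankW VW0 addn0 => VW.
  by have := rank_leq_col (V + W)%MS; rewrite VW leqNgt IJ_gt_n.
have [r r_neq0] : exists r, row r (V :&: W)%MS != 0.
  apply/existsP; apply: contraNT VW_neq0; rewrite negb_exists => /forallP VW0.
  by apply/eqP/row_matrixP => r; rewrite row0; apply/eqP; have := VW0 r; rewrite negbK.
have := row_sub r (V :&: W)%MS; rewrite sub_capmx => /andP[/submxP[D1 xV] /submxP[D2 xW]].
exists (row r (V :&: W)%MS); split => // i iN.
- by rewrite xV /V !mulmxA -(mulmxA _ Q1) (unitarymx_mulmxCt Q1U) mulmx1 mulmx_selmx_notin.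
- by rewrite xW /W !mulmxA -(mulmxA _ Q2) (unitarymx_mulmxCt Q2U) mulmx1 mulmx_selmx_notin.
Qed.

End CoordinateSubspaces.

Section MixedFactorization.
Local Open Scope sesquilinear_scope.
Variable C : numClosedFieldType.
Local Notation "''[' u , v ]" := (dotmx u v) : ring_scope.
Local Notation "''[' u ]" := (dotmx u u) : ring_scope.

(* Unlike the mixed Schwarz inequality it implies, this is stable under sums. *)
Definition mixed_factor n (T F G : 'M[C]_n) :=
  exists m, exists A B : 'M[C]_(n, m), forall x w,
  [/\ '[x *m T^t*, w] = '[x *m A, w *m B], '[x *m A] <= qform F x
    & '[w *m B] <= qform G w].

Lemma dotmx_row_mx m1 m2 (a c : 'rV[C]_m1) (b d : 'rV[C]_m2) :
  '[row_mx a b, row_mx c d] = '[a, c] + '[b, d].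
Proof. by rewrite !dotmxE tr_row_mx map_col_mx mul_row_col mxE. Qed.

Lemma mixed_factorD n (T S F1 F2 G1 G2 : 'M[C]_n) :
  mixed_factor T F1 G1 -> mixed_factor S F2 G2 ->
  mixed_factor (T + S) (F1 + F2) (G1 + G2).
Proof.
move=> [m1 [A1 [B1 TAB]]] [m2 [A2 [B2 SAB]]].
exists (m1 + m2)%N, (row_mx A1 A2), (row_mx B1 B2) => x w.
have [TE TA TB] := TAB x w; have [SE SA SB] := SAB x w.
rewrite !mul_mx_row !dotmx_row_mx !qformD; split; [|exact: lerD|exact: lerD].
have -> : '[x *m (T + S)^t*, w] = '[x *m T^t*, w] + '[x *m S^t*, w].
  by rewrite !dotmxE trmxCD mulmxDr mulmxDl mxE.
by rewrite TE SE.
Qed.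

Lemma mixed_factor_schwarz n (T F G : 'M[C]_n) x w : mixed_factor T F G ->
  `|'[x *m T^t*, w]| ^+ 2 <= qform F x * qform G w.
Proof.
move=> [m [A [B /(_ x w) [-> xA wB]]]].
apply: le_trans (CauchySchwarz _ (x *m A) (w *m B)).1 _.
by apply: ler_pM; rewrite ?dnorm_ge0.
Qed.

(* Take [w = x T^*]: then [|<x T^*, w>|^2 = '[w]^2], and divide by ['[w]]. *)
Lemma mixed_factor_loewner n (T F G : 'M[C]_n) (K : C) x :
  mixed_factor T F G -> 0 <= K -> 0 <= qform F x ->
  (forall w, qform G w <= K * '[w]) ->
  qform (T^t* *m T) x <= K * qform F x.
Proof.
move=> TFG K_ge0 Fx_ge0 GK; rewrite qform_mulCtmx; set w := x *m T^t*.
have := mixed_factor_schwarz x w TFG; rewrite ger0_norm ?dnorm_ge0 // => TFGw.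
have {TFGw} := le_trans TFGw (ler_wpM2l Fx_ge0 (GK w)).
have [->|w_neq0] := eqVneq '[w] 0; first by rewrite mulr_ge0.
rewrite expr2 mulrCA mulrA [K * _]mulrC ler_pM2r // lt_def w_neq0.
exact: dnorm_ge0.
Qed.

End MixedFactorization.

Section FunctionalCalculus.
Local Open Scope sesquilinear_scope.
Variable R : realType.
Local Notation C := R[i].

Lemma ge0_ReE (z : C) : 0 <= z -> z = (complex.Re z)%:C%C.
Proof. by move=> z_ge0; rewrite RRe_real // ger0_real. Qed.

Lemma ge0_Re (z : C) : 0 <= z -> 0 <= complex.Re z.
Proof. by move=> z_ge0; rewrite -ler0c -ge0_ReE. Qed.

Definition onRe (phi : R -> R) (z : C) : C := (phi (complex.Re z))%:C%C.

Lemma fcalcE (phi : R -> R) n (A : 'M[C]_n) :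
  fcalc phi A = (spectralmx A)^t* *m diag_mx (map_mx (onRe phi) (spectral_diag A))
                *m spectralmx A.
Proof. by rewrite /fcalc invmx_unitary // spectral_unitarymx. Qed.

Lemma fcalc_unitary_diag (phi : R -> R) n (P : 'M[C]_n) (d : 'rV[C]_n) :
  P \is unitarymx ->
  fcalc phi (P^t* *m diag_mx d *m P) = P^t* *m diag_mx (map_mx (onRe phi) d) *m P.
Proof.
move=> PU; rewrite fcalcE.
move: (normalmx_spectral (unitary_diag_normalmx d PU)).
move: (spectral_unitarymx (P^t* *m diag_mx d *m P)).
move: (spectralmx _) (spectral_diag _) => Q e QU Adec.
exact: unitary_diag_map PU QU (esym Adec).
Qed.

Lemma fcalc_eigen (phi : R -> R) n (A W : 'M[C]_n) (l : 'rV[C]_n) :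
  A \is normalmx -> A *m W = W *m diag_mx l ->
  fcalc phi A *m W = W *m diag_mx (map_mx (onRe phi) l).
Proof.
move=> An AW; rewrite fcalcE.
move: (normalmx_spectral An) (spectral_unitarymx A).
move: (spectralmx _) (spectral_diag _) (onRe phi) => Q e psi Adec QU.
have eQW : diag_mx e *m (Q *m W) = (Q *m W) *m diag_mx l.
  have := congr1 (fun B => Q *m B) AW; rewrite /= {1}Adec.
  by rewrite !mulmxA (unitarymx_mulmxCt QU) mul1mx => ->.
have := map_diag_mx_intertwine psi eQW => psi_eQW.
by rewrite -!mulmxA psi_eQW !mulmxA (unitarymx_mulCtmx QU) mul1mx.
Qed.

Lemma psdmx_fcalc (phi : R -> R) n (A : 'M[C]_n) :
  (forall t, 0 <= t -> 0 <= phi t) -> psdmx A -> psdmx (fcalc phi A).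
Proof.
move=> phi_ge0 [P [d [PU d_ge0 ->]]]; rewrite fcalc_unitary_diag //.
exists P, (map_mx (onRe phi) d); split => // i.
by rewrite mxE /onRe ler0c phi_ge0 // ge0_Re.
Qed.

Lemma absmx_unitary_diag n (X : 'M[C]_n) : exists P, exists d : 'rV[C]_n,
  [/\ P \is unitarymx, forall i, 0 <= d 0 i, X^t* *m X = P^t* *m diag_mx d *m P &
      absmx X = P^t* *m diag_mx (map_mx (onRe Num.sqrt) d) *m P].
Proof.
have [P [d [PU d_ge0 XX]]] := psdmx_mulCtmx X.
exists P, d; split; [exact: PU | exact: d_ge0 | exact: XX |].
by rewrite /absmx /adjmx XX (fcalc_unitary_diag _ _ PU).
Qed.

Lemma psdmx_absmx n (X : 'M[C]_n) : psdmx (absmx X).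
Proof. by apply: psdmx_fcalc (psdmx_mulCtmx X) => t _; apply: sqrtr_ge0. Qed.

Lemma absmx_psdmx n (A : 'M[C]_n) : psdmx A -> absmx A = A.
Proof.
move=> Apsd; have AA := psdmx_selfadj Apsd; case: Apsd => P [d [PU d_ge0 Adec]].
have sqrt_dd : map_mx (onRe Num.sqrt) (\row_j (d 0 j * d 0 j)) = d.
  apply/rowP => i; rewrite !mxE /onRe {1 2}(ge0_ReE (d_ge0 i)) -rmorphM /=.
  by rewrite -expr2 sqrtr_sqr ger0_norm ?ge0_Re // -ge0_ReE.
rewrite /absmx /adjmx AA Adec (unitary_diag_mul_self _ PU).
by rewrite (fcalc_unitary_diag _ _ PU) sqrt_dd.
Qed.

Lemma absmx_mul_self n (X : 'M[C]_n) : absmx X *m absmx X = X^t* *m X.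
Proof.
have [P [d [PU d_ge0 XX ->]]] := absmx_unitary_diag X.
have sqrt_d2 : \row_i (map_mx (onRe Num.sqrt) d 0 i * map_mx (onRe Num.sqrt) d 0 i) = d.
  apply/rowP => i; rewrite !mxE /onRe -rmorphM /= -expr2 sqr_sqrtr ?ge0_Re //.
  by rewrite -ge0_ReE.
by rewrite (unitary_diag_mul_self _ PU) sqrt_d2 XX.
Qed.

Fact rdiag_key : unit. Proof. exact: tt. Qed.
Definition rdiag_mx n (a : 'I_n -> R) : 'M[C]_n :=
  locked_with rdiag_key (diag_mx (\row_i (a i)%:C%C)).

Lemma rdiag_mxE n (a : 'I_n -> R) : rdiag_mx a = diag_mx (\row_i (a i)%:C%C).
Proof. by rewrite /rdiag_mx unlock. Qed.

Lemma eq_rdiag_mx n (a b : 'I_n -> R) : a =1 b -> rdiag_mx a = rdiag_mx b.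
Proof. by move=> ab; rewrite !rdiag_mxE; congr diag_mx; apply/rowP => i; rewrite !mxE ab. Qed.

Lemma mul_rdiag_mx n (a b : 'I_n -> R) :
  rdiag_mx a *m rdiag_mx b = rdiag_mx (fun i => a i * b i).
Proof.
rewrite !rdiag_mxE (mulmx_diag (\row_i (a i)%:C%C)); congr diag_mx.
by apply/rowP => i; rewrite !mxE rmorphM.
Qed.

Lemma rdiag_mxC n (a b : 'I_n -> R) :
  rdiag_mx a *m rdiag_mx b = rdiag_mx b *m rdiag_mx a.
Proof. by rewrite !mul_rdiag_mx; apply: eq_rdiag_mx => i; rewrite mulrC. Qed.

Lemma trmxC_rdiag n (a : 'I_n -> R) : (rdiag_mx a)^t* = rdiag_mx a.
Proof.
rewrite rdiag_mxE trmxC_diag; congr diag_mx; apply/rowP => i; rewrite !mxE.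
exact: conjc_real.
Qed.

Lemma map_onRe_rdiag (phi : R -> R) n (a : 'I_n -> R) :
  diag_mx (map_mx (onRe phi) (\row_i (a i)%:C%C)) = rdiag_mx (fun i => phi (a i)).
Proof. by rewrite rdiag_mxE; congr diag_mx; apply/rowP => i; rewrite !mxE /onRe. Qed.

Lemma fcalc_unitary_rdiag (phi : R -> R) n (P : 'M[C]_n) (a : 'I_n -> R) :
  P \is unitarymx ->
  fcalc phi (P^t* *m rdiag_mx a *m P) = P^t* *m rdiag_mx (fun i => phi (a i)) *m P.
Proof. by move=> PU; rewrite rdiag_mxE fcalc_unitary_diag // map_onRe_rdiag. Qed.

Lemma fcalc_eigen_rdiag (phi : R -> R) n (A W : 'M[C]_n) (a : 'I_n -> R) :
  A \is normalmx -> A *m W = W *m rdiag_mx a ->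
  fcalc phi A *m W = W *m rdiag_mx (fun i => phi (a i)).
Proof. by move=> An; rewrite rdiag_mxE => AW; rewrite (fcalc_eigen _ An AW) map_onRe_rdiag. Qed.

End FunctionalCalculus.

Section PolarDecomposition.
Local Open Scope sesquilinear_scope.
Variable R : realType.
Local Notation C := R[i].

Lemma psdmx_unitary_rdiag n (A : 'M[C]_n) : psdmx A ->
  exists P, exists s : 'I_n -> R,
  [/\ P \is unitarymx, forall i, 0 <= s i & A = P^t* *m rdiag_mx s *m P].
Proof.
case=> P [d [PU d_ge0 ->]]; exists P, (fun i => complex.Re (d 0 i)).
split=> [||]; [exact: PU | by move=> i; apply: ge0_Re |].
congr (_ *m _ *m _); rewrite rdiag_mxE; congr diag_mx.
by apply/rowP => i; rewrite mxE -ge0_ReE.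
Qed.

(* Normalise the non-zero columns of [Y], which are pairwise orthogonal. *)
Lemma orthocols_partial_isometry n (Y : 'M[C]_n) (s : 'I_n -> R) :
  Y^t* *m Y = rdiag_mx (fun i => s i ^+ 2) ->
  exists W : 'M[C]_n, [/\ Y = W *m rdiag_mx s, W *m W^t* *m W = W
    & Y *m Y^t* *m W = W *m rdiag_mx (fun i => s i ^+ 2)].
Proof.
move=> YY; pose si i := (s i)^-1; exists (Y *m rdiag_mx si); split.
- have Y_s0 k i : s i = 0 -> Y k i = 0.
    move=> si0; apply: mulCtmx_diag_eq0; rewrite YY rdiag_mxE mxE eqxx mulr1n mxE si0.
    by rewrite expr0n.
  apply/matrixP => k i; rewrite -mulmxA mul_rdiag_mx rdiag_mxE (mul_mx_diag Y) !mxE.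
  have [si0|si_neq0] := eqVneq (s i) 0; first by rewrite Y_s0 // mul0r.
  by rewrite /si mulVf // mulr1.
- rewrite trmxC_mul trmxC_rdiag !mulmxA -(mulmxA _ (Y^t*)) YY -!mulmxA !mul_rdiag_mx.
  congr (_ *m _); apply: eq_rdiag_mx => i; rewrite /si.
  have [->|si_neq0] := eqVneq (s i) 0; first by rewrite invr0 !mul0r.
  by rewrite expr2 mulfK // mulVf // mulr1.
- by rewrite !mulmxA -(mulmxA Y (Y^t*) Y) YY -!mulmxA rdiag_mxC.
Qed.

Lemma polar_partial_isometry n (T P : 'M[C]_n) (s : 'I_n -> R) :
  P \is unitarymx -> absmx T = P^t* *m rdiag_mx s *m P ->
  exists W : 'M[C]_n, [/\ T = W *m rdiag_mx s *m P, W *m W^t* *m W = W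
    & T *m T^t* *m W = W *m rdiag_mx (fun i => s i ^+ 2)].
Proof.
move=> PU absT; set Y := T *m P^t*.
have TE : T = Y *m P by rewrite /Y -mulmxA (unitarymx_mulCtmx PU) mulmx1.
have YY : Y^t* *m Y = rdiag_mx (fun i => s i ^+ 2).
  rewrite /Y trmxC_mul trmxCK !mulmxA -(mulmxA P) -absmx_mul_self absT.
  rewrite !mulmxA (unitarymx_mulmxCt PU) mul1mx -!mulmxA (unitarymx_mulmxCt PU).
  rewrite mulmx1 !mulmxA -(mulmxA _ P) (unitarymx_mulmxCt PU) mulmx1 mul_rdiag_mx.
  by apply: eq_rdiag_mx => i; rewrite expr2.
have [W [YW WW YYW]] := orthocols_partial_isometry YY.
exists W; split; [by rewrite TE YW | exact: WW |].
by rewrite TE trmxC_mul -!mulmxA (mulmxA P) (unitarymx_mulmxCt PU) mul1mx !mulmxA.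
Qed.

(* With [Pi = W W^*], [H - W M W^* = (1 - Pi) H (1 - Pi)]. *)
Lemma qform_partial_isometry_le n (H W : 'M[C]_n) (m : 'I_n -> R) w :
  psdmx H -> H *m W = W *m rdiag_mx m -> W *m W^t* *m W = W ->
  qform (W *m rdiag_mx m *m W^t*) w <= qform H w.
Proof.
move=> Hpsd HW WW; have HH := psdmx_selfadj Hpsd.
set M := rdiag_mx m; set Pi := W *m W^t*.
have PiPi : Pi^t* = Pi by rewrite /Pi trmxC_mul trmxCK.
have WW' : W^t* *m W *m W^t* = W^t*.
  by have := congr1 (fun X => X^t*) WW; rewrite /= !trmxC_mul trmxCK mulmxA.
have HPi : H *m Pi = W *m M *m W^t* by rewrite /Pi mulmxA HW.
have PiH : Pi *m H = W *m M *m W^t*.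
  have WH : W^t* *m H = M *m W^t*.
    by rewrite -{1}HH -trmxC_mul HW trmxC_mul trmxC_rdiag.
  by rewrite /Pi -mulmxA WH mulmxA.
have PiHPi : Pi *m H *m Pi = W *m M *m W^t*.
  by rewrite PiH /Pi -!mulmxA (mulmxA (W^t*)) WW'.
have HPi_perp : H - W *m M *m W^t* = (1%:M - Pi) *m H *m (1%:M - Pi).
  rewrite mulmxBl mul1mx PiH mulmxBr mulmx1 mulmxBl HPi -PiH PiHPi.
  by rewrite PiH subrr subr0.
rewrite -subr_ge0 -qformB HPi_perp.
have -> : qform ((1%:M - Pi) *m H *m (1%:M - Pi)) w = qform H (w *m (1%:M - Pi)).
  by rewrite !qformE trmxC_mul trmxCB trmxC1 PiPi !mulmxA.
exact: psdmx_qform_ge0.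
Qed.

Lemma mixed_factor_fcalc n (T : 'M[C]_n) (f g : R -> R) :
  (forall t, 0 <= t -> f t * g t = t) ->
  mixed_factor T (fcalc (fun t => f t ^+ 2) (absmx T))
                 (fcalc (fun t => g t ^+ 2) (absmx (adjmx T))).
Proof.
move=> fg_id.
have [P [s [PU s_ge0 absT]]] := psdmx_unitary_rdiag (psdmx_absmx T).
have [W [TE WW TTW]] := polar_partial_isometry PU absT.
set Gs := fcalc _ (absmx (adjmx T)).
have Gs_psd : psdmx Gs by apply/psdmx_fcalc/psdmx_absmx => t _; apply: sqr_ge0.
(* [|T^*| W = W s] since [T T^* W = W s^2]. *)
have GsW : Gs *m W = W *m rdiag_mx (fun i => g (s i) ^+ 2).
  apply: fcalc_eigen_rdiag; first exact/selfadj_normalmx/psdmx_selfadj/psdmx_absmx.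
  rewrite /absmx /adjmx trmxCK -/(adjmx T).
  rewrite (fcalc_eigen_rdiag _ _ TTW); last by apply: selfadj_normalmx; rewrite trmxC_mul trmxCK.
  by congr (_ *m _); apply: eq_rdiag_mx => i; rewrite sqrtr_sqr ger0_norm.
exists n, (P^t* *m rdiag_mx (fun i => f (s i))), (W *m rdiag_mx (fun i => g (s i))).
move=> x w; split.
- have sE : rdiag_mx s = rdiag_mx (fun i => f (s i)) *m rdiag_mx (fun i => g (s i)).
    by rewrite mul_rdiag_mx; apply: eq_rdiag_mx => i; rewrite fg_id.
  by rewrite !dotmxE TE !trmxC_mul !trmxC_rdiag sE !mulmxA.
- rewrite dnorm_mulmx absT (fcalc_unitary_rdiag _ _ PU) trmxC_mul trmxCK trmxC_rdiag.
  rewrite mulmxA -(mulmxA (P^t*)) mul_rdiag_mx.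
  by rewrite (eq_rdiag_mx (b := fun i => f (s i) ^+ 2)) // => i; rewrite expr2.
- rewrite dnorm_mulmx trmxC_mul trmxC_rdiag mulmxA -(mulmxA W) mul_rdiag_mx.
  rewrite (eq_rdiag_mx (b := fun i => g (s i) ^+ 2)) => [|i]; last by rewrite expr2.
  exact: qform_partial_isometry_le.
Qed.

End PolarDecomposition.

Lemma count_enum (T : finType) (P : pred T) : count P (enum T) = #|P|.
Proof. by rewrite cardE -size_filter /enum_mem filter_predT. Qed.

Section SortDecreasing.
Local Open Scope order_scope.
Context {disp : Order.disp_t} {T : orderType disp}.
Variable x0 : T.
Implicit Type s : seq T.

Lemma sort_ge_nth_le s k j : (k <= j < size s)%N ->
  nth x0 (sort >=%O s) j <= nth x0 (sort >=%O s) k.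
Proof.
move=> /andP[kj js].
have := sorted_leq_nth ge_trans (@lexx _ T) x0 (sort_sorted ge_total s).
by apply; rewrite ?inE ?size_sort //; apply: leq_ltn_trans kj js.
Qed.

Lemma nth_sort_ge_max s x : x \in s -> x <= nth x0 (sort >=%O s) 0.
Proof.
rewrite -(mem_sort >=%O) => /(nthP x0) [k ks <-].
by apply: sort_ge_nth_le; rewrite leq0n /= -(size_sort >=%O).
Qed.

Lemma count_ge_nth_sort_ge s j : (j < size s)%N ->
  (j.+1 <= count (fun v : T => (nth x0 (sort >=%O s) j <= v)%O) s)%N.
Proof.
move=> js; set t := sort >=%O s; set p := (X in count X s).
have t_s : perm_eq t s by rewrite perm_sort.
rewrite -(permP t_s p) -(cat_take_drop j.+1 t) count_cat.
apply: leq_trans (leq_addr _ _).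
have size_take_t : size (take j.+1 t) = j.+1 by rewrite size_takel // size_sort.
suff /eqP -> : count p (take j.+1 t) == size (take j.+1 t) by rewrite size_take_t.
rewrite -all_count; apply/(all_nthP x0) => k; rewrite size_take_t => kj.
by rewrite nth_take // /p; apply: sort_ge_nth_le; rewrite -ltnS kj.
Qed.

Lemma count_le_nth_sort_ge s j : (j < size s)%N ->
  (size s - j <= count (fun v : T => (v <= nth x0 (sort >=%O s) j)%O) s)%N.
Proof.
move=> js; set t := sort >=%O s; set p := (X in count X s).
have t_s : perm_eq t s by rewrite perm_sort.
rewrite -(permP t_s p) -(cat_take_drop j t) count_cat.
apply: leq_trans (leq_addl _ _).
have size_drop_t : size (drop j t) = (size s - j)%N by rewrite size_drop size_sort.
suff /eqP -> : count p (drop j t) == size (drop j t) by rewrite size_drop_t.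
rewrite -all_count; apply/(all_nthP x0) => k; rewrite size_drop_t => kj.
by rewrite nth_drop /p sort_ge_nth_le // leq_addr /= -ltn_subRL.
Qed.

End SortDecreasing.

Lemma sum_powR_le_sqrt (R : realType) (s t : seq R) (K p : R) :
  size s = size t -> 0 < p -> 0 <= K ->
  (forall x, x \in s -> 0 <= x) -> (forall x, x \in t -> 0 <= x) ->
  (forall i, (i < size s)%N -> nth 0 s i <= Num.sqrt K * Num.sqrt (nth 0 t i)) ->
  powR (\sum_(x <- s) powR x p) p^-1 <=
  Num.sqrt K * Num.sqrt (powR (\sum_(x <- t) powR x (p / 2)) (p / 2)^-1).
Proof.
move=> st p_gt0 K_ge0 s_ge0 t_ge0 st_le.
set B := \sum_(x <- t) powR x (p / 2).
have B_ge0 : 0 <= B by rewrite /B sumr_ge0 // => x _; apply: powR_ge0.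
have p_neq0 : p != 0 by rewrite gt_eqF.
have pV_ge0 : 0 <= p^-1 by rewrite invr_ge0 ltW.
have sum_le : \sum_(x <- s) powR x p <= powR (Num.sqrt K) p * B.
  rewrite /B (big_nth 0) [X in _ <= _ * X](big_nth 0) -st mulr_sumr !big_mkord.
  apply: ler_sum => i _.
  have si_ge0 : 0 <= nth 0 s i by apply/s_ge0/mem_nth.
  have ti_ge0 : 0 <= nth 0 t i by apply/t_ge0/mem_nth; rewrite -st.
  have -> : powR (nth 0 t i) (p / 2) = powR (Num.sqrt (nth 0 t i)) p.
    by rewrite -powR12_sqrt // -powRrM mulrC.
  rewrite -powRM ?sqrtr_ge0 //.
  apply: (ge0_ler_powR (ltW p_gt0)); rewrite ?nnegrE ?mulr_ge0 ?sqrtr_ge0 //.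
  exact: st_le.
apply: le_trans.
  apply: (ge0_ler_powR pV_ge0); last exact: sum_le.
    by rewrite nnegrE sumr_ge0 // => x _; apply: powR_ge0.
  by rewrite nnegrE mulr_ge0 // powR_ge0.
rewrite powRM ?powR_ge0 // -powRrM mulfV // powRr1 ?sqrtr_ge0 //.
rewrite -(@powR12_sqrt _ (B `^ (p / 2)^-1) (powR_ge0 _ _)) -powRrM.
by have -> : (p / 2)^-1 * 2^-1 = p^-1 by field.
Qed.

Section Eigenvalues.
Local Open Scope sesquilinear_scope.
Variable R : realType.
Local Notation C := R[i].
Local Notation "''[' u ]" := (dotmx u u) : ring_scope.

Definition spectral_seq n (A : 'M[C]_n) : seq R :=
  [seq complex.Re (spectral_diag A 0 i) | i <- enum 'I_n].

Lemma eigvalsE n (A : 'M[C]_n) : eigvals A = sort >=%O (spectral_seq A).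
Proof. by []. Qed.

Lemma size_spectral_seq n (A : 'M[C]_n) : size (spectral_seq A) = n.
Proof. by rewrite size_map size_enum_ord. Qed.

Lemma psdmx_eigvals_ge0 n (A : 'M[C]_n) v : psdmx A -> v \in eigvals A -> 0 <= v.
Proof.
move=> Apsd; rewrite eigvalsE mem_sort => /mapP [i _ ->].
by have [_ _ e_ge0] := psdmx_spectral Apsd; apply: ge0_Re.
Qed.

Lemma psdmx_nth_eigvals_ge0 n (A : 'M[C]_n) j : psdmx A -> 0 <= nth 0 (eigvals A) j.
Proof.
move=> Apsd; have [jA|jA] := ltnP j (size (eigvals A)); last by rewrite nth_default.
exact/(psdmx_eigvals_ge0 Apsd)/mem_nth.
Qed.

Lemma opnorm_psdmx n (G : 'M[C]_n) : psdmx G -> opnorm G = nth 0 (eigvals G) 0.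
Proof. by move=> Gpsd; rewrite /opnorm /sv /singvals absmx_psdmx. Qed.

Lemma qform_le_opnorm n (G : 'M[C]_n) w :
  psdmx G -> qform G w <= (opnorm G)%:C%C * '[w].
Proof.
move=> Gpsd; have [Gdec _ e_ge0] := psdmx_spectral Gpsd.
rewrite {1}Gdec; apply: qform_unitary_diag_le (spectral_unitarymx G) _ => i _.
rewrite (ge0_ReE (e_ge0 i)) lecR opnorm_psdmx // eigvalsE.
by apply: nth_sort_ge_max; apply: map_f; apply: mem_enum.
Qed.

(* Min-max: the eigenvectors of [A] for eigenvalues [>= λ_j(A)] and those of [B]
   for eigenvalues [<= λ_j(B)] span subspaces of dimensions [> j] and [>= n - j],
   which meet; a non-zero [x] in the intersection compares [λ_j(A)^2] with
   [K λ_j(B)]. *)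
Lemma eigvals_sqr_le n (A B : 'M[C]_n) (K : R) j : (j < n)%N -> 0 <= K ->
  psdmx A -> psdmx B -> (forall x, qform (A *m A) x <= K%:C%C * qform B x) ->
  nth 0 (eigvals A) j ^+ 2 <= K * nth 0 (eigvals B) j.
Proof.
move=> jn K_ge0 Apsd Bpsd AA_KB.
have [Adec _ eA_ge0] := psdmx_spectral Apsd; have [Bdec _ eB_ge0] := psdmx_spectral Bpsd.
have QAU := spectral_unitarymx A; have QBU := spectral_unitarymx B.
set QA := spectralmx A in Adec QAU *; set eA := spectral_diag A in Adec eA_ge0 *.
set QB := spectralmx B in Bdec QBU *; set eB := spectral_diag B in Bdec eB_ge0 *.
set a := nth 0 (eigvals A) j; set b := nth 0 (eigvals B) j.
have a_ge0 : 0 <= a := psdmx_nth_eigvals_ge0 j Apsd.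
pose I := [pred i : 'I_n | a <= complex.Re (eA 0 i)].
pose J := [pred i : 'I_n | complex.Re (eB 0 i) <= b].
have cardI : (j.+1 <= #|I|)%N.
  have jA : (j < size (spectral_seq A))%N by rewrite size_spectral_seq.
  have /leq_trans := count_ge_nth_sort_ge 0 jA; apply.
  by rewrite count_map -count_enum.
have cardJ : (n - j <= #|J|)%N.
  have jB : (j < size (spectral_seq B))%N by rewrite size_spectral_seq.
  have /leq_trans := count_le_nth_sort_ge 0 jB; rewrite size_spectral_seq; apply.
  by rewrite count_map -count_enum.
have cardIJ : (n < #|I| + #|J|)%N.
  have n_split : (j.+1 + (n - j))%N = n.+1 by rewrite addSn subnKC // ltnW.
  by rewrite -n_split; apply: leq_add.
have [x [x_neq0 xI xJ]] := coord_subspaces_meet QAU QBU cardIJ.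
have lower : (a ^+ 2)%:C%C * '[x] <= qform (A *m A) x.
  rewrite Adec (unitary_diag_mul_self _ QAU).
  apply: qform_unitary_diag_ge QAU _ => i xi_neq0.
  have iI : i \in I by case: (boolP (i \in I)) => // /xI xi0; rewrite xi0 eqxx in xi_neq0.
  rewrite mxE (ge0_ReE (eA_ge0 i)) -rmorphM lecR expr2.
  by apply: ler_pM.
have upper : qform B x <= b%:C%C * '[x].
  rewrite Bdec; apply: qform_unitary_diag_le QBU _ => i xi_neq0.
  have iJ : i \in J by case: (boolP (i \in J)) => // /xJ xi0; rewrite xi0 eqxx in xi_neq0.
  by rewrite (ge0_ReE (eB_ge0 i)) lecR.
have := le_trans lower (le_trans (AA_KB x) (ler_wpM2l _ upper)).
by rewrite ler0c mulrA -rmorphM ler_pM2r ?dnorm_gt0 // lecR; apply.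
Qed.

Lemma sv_le_loewner n (X F : 'M[C]_n) (K : R) j : (j < n)%N -> 0 <= K -> psdmx F ->
  (forall x, qform (X^t* *m X) x <= K%:C%C * qform F x) ->
  sv X j <= Num.sqrt K * Num.sqrt (sv F j).
Proof.
move=> jn K_ge0 Fpsd XX_KF; rewrite /sv /singvals (absmx_psdmx Fpsd).
have a_ge0 := psdmx_nth_eigvals_ge0 j (psdmx_absmx X).
have := eigvals_sqr_le jn K_ge0 (psdmx_absmx X) Fpsd.
rewrite absmx_mul_self => /(_ XX_KF) a2_le.
rewrite -sqrtrM // -(ger0_norm a_ge0) -sqrtr_sqr ler_sqrt //.
by rewrite mulr_ge0 // psdmx_nth_eigvals_ge0.
Qed.

Lemma schatten_le_sv n (X F : 'M[C]_n) (K p : R) : 0 < p -> 0 <= K -> psdmx F ->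
  (forall j, (j < n)%N -> sv X j <= Num.sqrt K * Num.sqrt (sv F j)) ->
  schatten p X <= Num.sqrt K * Num.sqrt (schatten (p / 2) F).
Proof.
move=> p_gt0 K_ge0 Fpsd svXF; rewrite /schatten.
apply: (sum_powR_le_sqrt (s := singvals X) (t := singvals F) _ p_gt0 K_ge0).
- by rewrite /singvals (absmx_psdmx Fpsd) !eigvalsE !size_sort !size_spectral_seq.
- by move=> v; apply/psdmx_eigvals_ge0/psdmx_absmx.
- by move=> v; rewrite /singvals (absmx_psdmx Fpsd); apply: psdmx_eigvals_ge0.
- by move=> j; rewrite /singvals eigvalsE size_sort size_spectral_seq; apply: svXF.
Qed.

End Eigenvalues.

Unset Implicit Arguments. Set Strict Implicit. Set Printing Implicit Defensive.

Import numFieldNormedType.Exports.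
Local Open Scope classical_set_scope.

Theorem theorem4p2 (R : realType) (n : nat) (T S : 'M[R[i]]_n)
    (e f g h : R -> R) :
  {within [set x : R | 0 <= x], continuous e} ->
  {within [set x : R | 0 <= x], continuous f} ->
  {within [set x : R | 0 <= x], continuous g} ->
  {within [set x : R | 0 <= x], continuous h} ->
  (forall t : R, 0 <= t -> 0 <= e t) ->
  (forall t : R, 0 <= t -> 0 <= f t) ->
  (forall t : R, 0 <= t -> 0 <= g t) ->
  (forall t : R, 0 <= t -> 0 <= h t) ->
  (forall t : R, 0 <= t -> f t * g t = t) ->
  (forall t : R, 0 <= t -> e t * h t = t) ->
  let G := fcalc (fun t => g t ^+ 2) (absmx (adjmx T))
           + fcalc (fun t => h t ^+ 2) (absmx (adjmx S)) in
  let F := fcalc (fun t => f t ^+ 2) (absmx T)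
           + fcalc (fun t => e t ^+ 2) (absmx S) in
  (forall j : 'I_n,
      sv (T + S) j <= Num.sqrt (opnorm G) * Num.sqrt (sv F j)) /\
  (forall p : R, 0 < p ->
      schatten p (T + S) <= Num.sqrt (opnorm G) * Num.sqrt (schatten (p / 2) F)).
Proof.
move=> _ _ _ _ _ _ _ _ fg_id eh_id G F.
have sqr_psdmx (phi : R -> R) A : psdmx A -> psdmx (fcalc (fun t => phi t ^+ 2) A).
  by apply: psdmx_fcalc => t _; apply: sqr_ge0.
have Gpsd : psdmx G by apply: psdmxD; apply/sqr_psdmx/psdmx_absmx.
have Fpsd : psdmx F by apply: psdmxD; apply/sqr_psdmx/psdmx_absmx.
have K_ge0 : 0 <= opnorm G by rewrite opnorm_psdmx // psdmx_nth_eigvals_ge0.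
have TS_FG : mixed_factor (T + S) F G :=
  mixed_factorD (mixed_factor_fcalc T fg_id) (mixed_factor_fcalc S eh_id).
have sv_le j : (j < n)%N -> sv (T + S) j <= Num.sqrt (opnorm G) * Num.sqrt (sv F j).
  move=> jn; apply: (sv_le_loewner jn K_ge0 Fpsd) => x.
  apply: (mixed_factor_loewner TS_FG).
  - by rewrite ler0c.
  - exact: psdmx_qform_ge0 x Fpsd.
  - by move=> w; apply: qform_le_opnorm.
split=> [j|p p_gt0]; first exact: sv_le.
exact: schatten_le_sv p_gt0 K_ge0 Fpsd sv_le.
Qed.
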